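(* Let $x,y$ be non-commuting indeterminates and $C=xyx^{-1}y^{-1}$. Let $(R_n)_{n\in\mathbb Z}$ satisfy $$R_{2n}CR_{2n-2}=1+R_{2n-1},\qquad R_{2n+1}CR_{2n-1}=1+R_{2n}^4\qquad(n\in\mathbb Z),$$ with $R_0=yxy^{-1}$ and $R_1=y$. Then for all $n\ge0$, $R_n$ is a Laurent polynomial in $x,y$ with only non-negative integer coefficients.
   Context: Work in the free skew field (non-commutative rational functions) over $\mathbb C$ generated by $x,y$. A Laurent polynomial in $x,y$ is a $\mathbb Z$-linear combination of words in $x^{\pm1},y^{\pm1}$. *)

From mathcomp Require Import all_boot all_order all_algebra.
Set Implicit Arguments. Unset Strict Implicit. Unset Printing Implicit Defensive.
Import GRing.Theory.
Local Open Scope ring_scope.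

(* A letter of the free group on {x, y}: (is_y, is_inverse).
   (false,false)=x, (false,true)=x^-1, (true,false)=y, (true,true)=y^-1. *)
Definition letter := (bool * bool)%type.
Definition word := seq letter.

Definition eval_letter (D : unitRingType) (x y : D) (l : letter) : D :=
  let g := if l.1 then y else x in if l.2 then g^-1 else g.

Definition eval_word (D : unitRingType) (x y : D) (w : word) : D :=
  \prod_(l <- w) eval_letter x y l.

(* freely reduced words: no adjacent pair  g g^-1  or  g^-1 g *)
Definition reduced_word (w : word) : bool :=
  sorted (fun l1 l2 : letter => ~~ ((l1.1 == l2.1) && (l1.2 != l2.2))) w.

Definition division_ring (D : unitRingType) : Prop :=
  forall a : D, a != 0 -> a \is a GRing.unit.

(* the group ring Z[F(x,y)] of the free group embeds into D via x, y:
   no nontrivial Z-combination of distinct reduced words vanishes. *)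
Definition free_group_ring_embeds (D : unitRingType) (x y : D) : Prop :=
  forall s : seq (int * word),
    s != [::] -> uniq (map snd s) -> all reduced_word (map snd s) ->
    all (fun p => p.1 != 0) s ->
    \sum_(p <- s) p.1%:~R * eval_word x y p.2 != 0.

Definition commC (D : unitRingType) (x y : D) : D := x * y * x^-1 * y^-1.

Definition nonneg_laurent (D : unitRingType) (x y a : D) : Prop :=
  exists s : seq (nat * word), a = \sum_(p <- s) p.1%:R * eval_word x y p.2.

From mathcomp Require Import all_boot all_order all_algebra.
From mathcomp Require Import zify.
Set Implicit Arguments. Unset Strict Implicit. Unset Printing Implicit Defensive.
Import GRing.Theory.
Local Open Scope ring_scope.

(* Write E_m = R_(2m), O_m = R_(2m+1) and C = x y x^-1 y^-1. The recurrences preserve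
     Q O_m = E_(m+1)^2 + C E_m C E_m,   C E_m Q - Q E_m = C E_(m+1) C - E_(m+1),
     E_(m+1) Q - Q E_(m+1) C = E_m - C E_m C,   O_m E_(m+1) = E_(m+1) C O_m,
     E_m E_(m+1) = C^-1 + O_m,
   where Q = U + W, U = R_2 R_2 y^-1, W = x x y^-1; together they force the linear recurrence
   E_(m+2) = Q E_(m+1) - C E_m. Write a >= b when a - b is a Laurent polynomial with
   nonnegative coefficients. Since W U >= C and U >= G = y x^-1 y x^-1 y^-1, the linear
   recurrence propagates the bounds E_(m+1) >= alpha_m and E_(m+2) >= U E_(m+1) + beta_(m+1),
   and as alpha_m beta_(m+1) = C^-1 the odd terms
   O_(m+1) = alpha_m (E_(m+2) - beta_(m+1)) + (E_(m+1) - alpha_m) E_(m+2) are nonnegative too.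
   Division is only needed to invert the terms, which do not vanish because 1 + a with
   a >= 0 is nonzero in the group ring of the free group. *)

Inductive zexpr := ZAtom of nat | ZZero | ZAdd of zexpr & zexpr | ZOpp of zexpr.

Section ZmoduleReflection.
Variable V : zmodType.

Fixpoint zexpr_eval (env : seq V) (e : zexpr) : V :=
  match e with
  | ZAtom j => env`_j
  | ZZero => 0
  | ZAdd e1 e2 => zexpr_eval env e1 + zexpr_eval env e2
  | ZOpp e1 => - zexpr_eval env e1
  end.

Fixpoint zexpr_coef (e : zexpr) (i : nat) : int :=
  match e with
  | ZAtom j => (i == j)%:Z
  | ZZero => 0
  | ZAdd e1 e2 => zexpr_coef e1 i + zexpr_coef e2 i
  | ZOpp e1 => - zexpr_coef e1 i
  end.

Lemma zexpr_evalE env e :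
  zexpr_eval env e = \sum_(i < size env) env`_i *~ zexpr_coef e i.
Proof.
elim: e => [j||e1 IH1 e2 IH2|e1 IH1] /=.
- have [ltj|lej] := ltnP j (size env).
    rewrite (bigD1 (Ordinal ltj)) //= eqxx mulr1z big1 ?addr0 // => i.
    by rewrite -val_eqE /= => /negbTE ->.
  rewrite nth_default // big1 // => i _.
  by rewrite ltn_eqF ?mulr0z // (leq_trans (ltn_ord i) lej).
- by rewrite big1 // => i _; rewrite mulr0z.
- by rewrite IH1 IH2 -big_split; apply: eq_bigr => i _; rewrite mulrzDr.
- by rewrite IH1 -sumrN; apply: eq_bigr => i _; rewrite mulrNz.
Qed.

Lemma zexpr_eval_eq env e1 e2 :
  all (fun i => zexpr_coef e1 i == zexpr_coef e2 i) (iota 0 (size env)) ->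
  zexpr_eval env e1 = zexpr_eval env e2.
Proof.
move=> /allP eq_coef; rewrite !zexpr_evalE; apply: eq_bigr => i _.
by rewrite (eqP (eq_coef i _)) // mem_iota add0n ltn_ord.
Qed.

End ZmoduleReflection.

Ltac zmod_index t env :=
  match env with
  | cons ?u ?r =>
      match constr:(tt) with
      | _ => let _ := match constr:(tt) with _ => unify t u end in constr:(O)
      | _ => let n := zmod_index t r in constr:(S n)
      end
  end.

Ltac zmod_atoms t acc :=
  match t with
  | @GRing.add _ ?a ?b => let acc1 := zmod_atoms a acc in zmod_atoms b acc1
  | @GRing.opp _ ?a => zmod_atoms a acc
  | @GRing.zero _ => acc
  | _ => match constr:(tt) with
         | _ => let _ := zmod_index t acc in acc
         | _ => constr:(cons t acc)
         end
  end.

Ltac zmod_reify t env :=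
  match t with
  | @GRing.add _ ?a ?b =>
      let ra := zmod_reify a env in let rb := zmod_reify b env in constr:(ZAdd ra rb)
  | @GRing.opp _ ?a => let ra := zmod_reify a env in constr:(ZOpp ra)
  | @GRing.zero _ => constr:(ZZero)
  | _ => let i := zmod_index t env in constr:(ZAtom i)
  end.

(* Proves an equation between sums and differences, any other subterm being an
   opaque atom; in a ring, run [expand] first so that atoms are monomials. *)
Ltac zmodule :=
  match goal with
  | |- @eq ?T ?l ?r =>
    let env0 := zmod_atoms l (@nil T) in
    let env := zmod_atoms r env0 in
    let el := zmod_reify l env in
    let er := zmod_reify r env in
    change (@zexpr_eval _ env el = @zexpr_eval _ env er);
    apply: zexpr_eval_eq; vm_compute; reflexivity
  end.

Ltac expand := repeat progress rewrite ?mulrDl ?mulrDr ?mulrBl ?mulrBr ?mulNr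
  ?mulrN ?opprK ?mul1r ?mulr1 ?mulr0 ?mul0r ?mulrA.

Section ConservedQuantities.
Variables (D : unitRingType) (C Ci Q : D).
Hypotheses (CCi : C * Ci = 1) (CiC : Ci * C = 1).

Definition conserved (e0 e1 o0 : D) : Prop :=
  [/\ Q * o0 = e1 * e1 + C * e0 * C * e0,
      C * e0 * Q - Q * e0 = C * e1 * C - e1,
      e1 * Q - Q * e1 * C = e0 - C * e0 * C,
      o0 * e1 = e1 * C * o0
    & e0 * e1 = Ci + o0].

Section Step.
Variables e0 e1 e2 o0 o1 : D.
Hypotheses (J : Q * o0 = e1 * e1 + C * e0 * C * e0)
  (K1 : C * e0 * Q - Q * e0 = C * e1 * C - e1)
  (K2 : e1 * Q - Q * e1 * C = e0 - C * e0 * C)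
  (comm_o0e1 : o0 * e1 = e1 * C * o0) (prod_e0e1 : e0 * e1 = Ci + o0).
Hypotheses (o0_unit : o0 \is a GRing.unit) (e1_unit : e1 \is a GRing.unit).
Hypotheses (rec_odd : o1 * C * o0 = 1 + e1 ^+ 4) (rec_even : e2 * C * e1 = 1 + o1).

Let C_unit : C \is a GRing.unit. Proof. by apply/unitrP; exists Ci. Qed.
Let Ce1_unit : C * e1 \is a GRing.unit. Proof. by rewrite unitrMl. Qed.
Let Co0_unit : C * o0 \is a GRing.unit. Proof. by rewrite unitrMl. Qed.

Let expr4 (a : D) : a ^+ 4 = a * a * a * a.
Proof. by rewrite !exprS expr0 mulr1 !mulrA. Qed.

Let o0E : o0 = e0 * e1 - Ci.
Proof. by rewrite prod_e0e1 addrC addKr. Qed.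

Let Co0E : C * o0 = C * e0 * e1 - 1.
Proof. by rewrite o0E mulrBr CCi mulrA. Qed.

Let Co0El a : a * C * o0 = a * C * e0 * e1 - a.
Proof. by rewrite -mulrA Co0E mulrBr mulr1 !mulrA. Qed.

Let Co0e1l a : a * o0 * e1 = a * e1 * C * o0.
Proof. by rewrite -mulrA comm_o0e1 !mulrA. Qed.

Lemma odd_next : o1 = (Q * e1 - C * e0) * C * e1 - 1.
Proof.
apply: (mulIr Co0_unit); rewrite [o1 * _]mulrA rec_odd expr4.
by expand; rewrite -!Co0e1l !Co0El Co0E J; expand; zmodule.
Qed.

Lemma even_next : e2 = Q * e1 - C * e0.
Proof. by apply: (mulIr Ce1_unit); rewrite !mulrA rec_even odd_next; zmodule. Qed.

Let rec_oddl a : a * o1 * C * o0 = a + a * e1 * e1 * e1 * e1.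
Proof. by rewrite -!mulrA [o1 * _]mulrA rec_odd expr4 mulrDr mulr1 !mulrA. Qed.

Let rec_evenl a : a * e2 * C * e1 = a + a * o1.
Proof. by rewrite -!mulrA [e2 * _]mulrA rec_even mulrDr mulr1. Qed.

Let Ce1o1 : e1 * o1 = o1 * C * e1.
Proof.
apply: (mulIr Co0_unit); rewrite !mulrA rec_oddl -Co0e1l rec_odd expr4.
by expand; zmodule.
Qed.

Let Ce1o1l a : a * o1 * C * e1 = a * e1 * o1.
Proof. by rewrite -!mulrA [o1 * _]mulrA -Ce1o1 !mulrA. Qed.

Lemma commute_next : o1 * e2 = e2 * C * o1.
Proof.
apply: (mulIr Ce1_unit); rewrite !mulrA rec_evenl Ce1o1l rec_even.
by expand; zmodule.
Qed.

Lemma product_next : e1 * e2 = Ci + o1.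
Proof.
have e1e2C : e1 * e2 * C = 1 + o1 * C.
  by apply: (mulIr e1_unit); rewrite rec_evenl Ce1o1; expand; zmodule.
by rewrite -[e1 * e2]mulr1 -CCi mulrA e1e2C mulrDl mul1r -mulrA CCi mulr1.
Qed.

Let K1r : C * e0 * Q = Q * e0 + C * e1 * C - e1.
Proof. by rewrite -addrA -K1 addrC subrK. Qed.

Let K2rl a : a * e1 * Q = a * Q * e1 * C + a * e0 - a * C * e0 * C.
Proof. by rewrite -mulrA -(subrK (Q * e1 * C) (e1 * Q)) K2; expand; zmodule. Qed.

Let Je0 : C * e0 * C * e0 = Q * o0 - e1 * e1.
Proof. by rewrite J addrC addKr. Qed.

Lemma J_next : Q * o1 = e2 * e2 + C * e1 * C * e1.
Proof.
rewrite -[o1](addKr Ci) -product_next even_next.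
by expand; rewrite K1r Je0 o0E; expand; zmodule.
Qed.

Lemma K1_next : C * e1 * Q - Q * e1 = C * e2 * C - e2.
Proof. by rewrite even_next; expand; rewrite K2rl; expand; zmodule. Qed.

Lemma K2_next : e2 * Q - Q * e2 * C = e1 - C * e1 * C.
Proof. by rewrite even_next; expand; rewrite K2rl K1r; expand; zmodule. Qed.

Lemma conserved_next : e2 = Q * e1 - C * e0 /\ conserved e1 e2 o1.
Proof.
split; first exact: even_next.
by split; [exact: J_next | exact: K1_next | exact: K2_next
  | exact: commute_next | exact: product_next].
Qed.

End Step.

Lemma conserved_step e0 e1 e2 o0 o1 :
  conserved e0 e1 o0 -> o0 \is a GRing.unit -> e1 \is a GRing.unit ->
  o1 * C * o0 = 1 + e1 ^+ 4 -> e2 * C * e1 = 1 + o1 ->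
  e2 = Q * e1 - C * e0 /\ conserved e1 e2 o1.
Proof. by case=> J K1 K2 comm_o0e1 prod_e0e1; apply: conserved_next. Qed.

End ConservedQuantities.

Lemma sum_by_key (V : nmodType) (T I : eqType) (k : T -> I)
    (s : seq T) (F : T -> V) :
  \sum_(t <- s) F t = \sum_(i <- undup (map k s)) \sum_(t <- s | k t == i) F t.
Proof.
rewrite (exchange_big_dep predT) //=; apply: eq_big_seq => t st.
rewrite -big_filter (eq_filter (a2 := pred1 (k t))) => [|i]; last exact: eq_sym.
by rewrite filter_pred1_uniq ?undup_uniq ?mem_undup ?map_f // big_seq1.
Qed.

Section NonnegLaurent.
Variables (D : unitRingType) (x y : D).
Local Notation nonneg := (nonneg_laurent x y).
Local Notation laurent s := (\sum_(p <- s) p.1%:R * eval_word x y p.2).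

Lemma eval_word_cat w1 w2 :
  eval_word x y (w1 ++ w2) = eval_word x y w1 * eval_word x y w2.
Proof. exact: big_cat. Qed.

Lemma eval_word_cons l w :
  eval_word x y (l :: w) = eval_letter x y l * eval_word x y w.
Proof. exact: big_cons. Qed.

Lemma nonneg_laurent0 : nonneg 0.
Proof. by exists [::]; rewrite big_nil. Qed.

Lemma nonneg_laurent_word w : nonneg (eval_word x y w).
Proof. by exists [:: (1%N, w)]; rewrite big_seq1 mul1r. Qed.

Lemma nonneg_laurentD a b : nonneg a -> nonneg b -> nonneg (a + b).
Proof. by move=> [s ->] [t ->]; exists (s ++ t); rewrite big_cat. Qed.

Lemma nonneg_laurentM a b : nonneg a -> nonneg b -> nonneg (a * b).
Proof.
move=> [s ->] [t ->]; exists [seq (p.1 * q.1, p.2 ++ q.2)%N | p <- s, q <- t].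
rewrite big_allpairs_dep mulr_suml; apply: eq_bigr => p _.
rewrite mulr_sumr; apply: eq_bigr => q _ /=.
by rewrite eval_word_cat !mulr_natl mulrnAl mulrnAr mulnC mulrnA.
Qed.

Lemma nonneg_laurent1 : nonneg 1.
Proof. by have := nonneg_laurent_word [::]; rewrite /eval_word big_nil. Qed.

Lemma nonneg_laurentX a k : nonneg a -> nonneg (a ^+ k).
Proof.
move=> nn_a; elim: k => [|k IHk]; first exact: nonneg_laurent1.
by rewrite exprS; apply: nonneg_laurentM.
Qed.

Lemma nonneg_laurent_letter l : nonneg (eval_letter x y l).
Proof.
by have := nonneg_laurent_word [:: l]; rewrite eval_word_cons /eval_word big_nil mulr1.
Qed.

Lemma nonneg_laurent_geq a b : nonneg b -> nonneg (a - b) -> nonneg a.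
Proof. by move=> nn_b nn_ab; rewrite -(subrK b a); apply: nonneg_laurentD. Qed.

Section FreeReduction.
Hypotheses (x_unit : x \is a GRing.unit) (y_unit : y \is a GRing.unit).

Definition inverse_letters (l l' : letter) := (l.1 == l'.1) && (l.2 != l'.2).

Definition push_letter (l : letter) (w : word) : word :=
  if w is l' :: w' then (if inverse_letters l l' then w' else l :: w) else [:: l].

Definition freduce (w : word) : word := foldr push_letter [::] w.

Lemma freduce_reduced w : reduced_word (freduce w).
Proof.
elim: w => [//|l w] /=; rewrite /reduced_word; case: (freduce w) => [//|l' w'] /= red_w.
by case: ifPn => [_|not_inv]; [exact: path_sorted red_w | rewrite /= not_inv].
Qed.

Lemma eval_inverse_letters l l' :
  inverse_letters l l' -> eval_letter x y l * eval_letter x y l' = 1.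
Proof.
case: l l' => [b1 c1] [b2 c2]; rewrite /inverse_letters /eval_letter /= => /andP [/eqP <-].
have g_unit : (if b1 then y else x) \is a GRing.unit by case: b1.
by case: c1; case: c2 => //= _; [rewrite mulVr | rewrite mulrV].
Qed.

Lemma eval_freduce w : eval_word x y (freduce w) = eval_word x y w.
Proof.
elim: w => [//|l w IHw] /=; rewrite eval_word_cons -IHw.
case: (freduce w) => [|l' w'] /=; first by rewrite !eval_word_cons.
case: ifP => inv_ll'; last by rewrite eval_word_cons.
by rewrite eval_word_cons mulrA eval_inverse_letters // mul1r.
Qed.

Hypothesis free : free_group_ring_embeds x y.

Lemma laurent_neq0 (s : seq (nat * word)) p :
  p \in s -> (0 < p.1)%N -> laurent s != 0.
Proof.
move=> ps p1_gt0; set s' := [seq (q.1, freduce q.2) | q <- s].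
have -> : laurent s = laurent s'.
  by rewrite big_map; apply: eq_bigr => q _; rewrite eval_freduce.
set ws := undup (map snd s'); pose c w := (\sum_(q <- s' | q.2 == w) q.1)%N.
have -> : laurent s' = \sum_(w <- ws | c w != 0%N) (c w)%:R * eval_word x y w.
  rewrite (sum_by_key snd) [RHS]big_mkcond; apply: eq_bigr => w _.
  have -> : \sum_(q <- s' | q.2 == w) q.1%:R * eval_word x y q.2 =
      (c w)%:R * eval_word x y w.
    by rewrite natr_sum mulr_suml; apply: eq_bigr => q /eqP ->.
  by case: eqP => [->|]; rewrite ?mul0r.
have -> : \sum_(w <- ws | c w != 0%N) (c w)%:R * eval_word x y w =
    \sum_(q <- [seq ((c w)%:Z, w) | w <- ws & c w != 0%N]) q.1%:~R * eval_word x y q.2.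
  by rewrite big_map big_filter.
have ps' : (p.1, freduce p.2) \in s' by apply: (map_f (fun q => (q.1, freduce q.2))).
have c_pos : has (fun w => c w != 0%N) ws.
  apply/hasP; exists (freduce p.2).
    by rewrite mem_undup; apply/mapP; exists (p.1, freduce p.2).
  by rewrite sum_nat_seq_neq0; apply/hasP; exists (p.1, freduce p.2); rewrite //= eqxx -lt0n.
apply: free.
- by rewrite -size_eq0 size_map size_filter -lt0n -has_count.
- by rewrite -map_comp map_id filter_uniq ?undup_uniq.
- rewrite -map_comp map_id; apply/allP => w; rewrite mem_filter mem_undup => /andP[_].
  by case/mapP => q /mapP[q' _ ->] ->; apply: freduce_reduced.
- by rewrite all_map; apply/allP => w; rewrite mem_filter /= => /andP[].
Qed.

Lemma add1_nonneg_laurent_neq0 z : nonneg z -> 1 + z != 0.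
Proof.
move=> [s ->]; have -> : 1 + laurent s = laurent ((1%N, [::]) :: s).
  by rewrite big_cons /eval_word big_nil mulr1.
exact: (laurent_neq0 (mem_head _ _)).
Qed.

End FreeReduction.

Lemma eval_letter_neq0 l : free_group_ring_embeds x y -> eval_letter x y l != 0.
Proof.
move=> /(_ [:: (1, [:: l])] isT isT isT isT).
by rewrite big_seq1 eval_word_cons /eval_word big_nil mulr1 mul1r.
Qed.

End NonnegLaurent.

Section Positivity.
Variables (D : unitRingType) (x y : D).
Hypotheses (x_unit : x \is a GRing.unit) (y_unit : y \is a GRing.unit).
Local Notation nonneg := (nonneg_laurent x y).
Local Notation C := (commC x y).

Ltac cancel_xy := rewrite ?(mulrK x_unit) ?(mulrVK x_unit) ?(mulrK y_unit)
  ?(mulrVK y_unit) ?(mulrV x_unit) ?(mulVr x_unit) ?(mulrV y_unit)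
  ?(mulVr y_unit) ?mul1r ?mulr1.

Ltac nonneg_laurent_auto := repeat first
  [ apply: nonneg_laurent0 | apply: nonneg_laurent1
  | apply: (nonneg_laurent_letter x y (false, false))
  | apply: (nonneg_laurent_letter x y (false, true))
  | apply: (nonneg_laurent_letter x y (true, false))
  | apply: (nonneg_laurent_letter x y (true, true))
  | apply: nonneg_laurentD | apply: nonneg_laurentM ].

Definition Cinv := y * x * y^-1 * x^-1.
Definition R2 := (1 + y) * x^-1.
Definition U := R2 * R2 * y^-1.
Definition W := x * x * y^-1.
Definition Q := U + W.
Definition G := y * x^-1 * y * x^-1 * y^-1.
Definition alpha k := y * x^-1 * (y * x^-1 * x^-1) ^+ k.
Definition beta k := W ^+ k * x^-1.

Lemma commC_Cinv : C * Cinv = 1.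
Proof. by rewrite /commC /Cinv !mulrA; do 8 cancel_xy. Qed.

Lemma Cinv_commC : Cinv * C = 1.
Proof. by rewrite /commC /Cinv !mulrA; do 8 cancel_xy. Qed.

Lemma nonneg_alpha k : nonneg (alpha k).
Proof. by apply: nonneg_laurentM; [|apply: nonneg_laurentX]; nonneg_laurent_auto. Qed.

Lemma nonneg_beta k : nonneg (beta k).
Proof. by apply: nonneg_laurentM; [apply: nonneg_laurentX|]; nonneg_laurent_auto. Qed.

Lemma G_alpha k : G * alpha k = alpha k.+1.
Proof. by rewrite /G /alpha exprS !mulrA; do 3 cancel_xy. Qed.

Lemma W_beta k : W * beta k = beta k.+1.
Proof. by rewrite /beta exprS mulrA. Qed.

Lemma alpha_beta k : alpha k * beta k.+1 = Cinv.
Proof.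
have pW : y * x^-1 * x^-1 * W = 1 by rewrite /W !mulrA; do 4 cancel_xy.
have pW_k : (y * x^-1 * x^-1) ^+ k * W ^+ k = 1.
  elim: k => [|k IHk]; first by rewrite mulr1.
  by rewrite exprSr exprS mulrA -[_ * _ * W]mulrA pW mulr1.
rewrite /alpha /beta exprSr !mulrA -[y * x^-1 * _ * _]mulrA pW_k mulr1.
by rewrite /Cinv; do 4 cancel_xy.
Qed.

Lemma alpha_bound_step k e1 e2 :
  nonneg (e1 - alpha k) -> nonneg (e2 - U * e1 - beta k.+1) ->
  nonneg (e2 - alpha k.+1).
Proof.
move=> bound1 bound2.
have nonneg_U_G : nonneg (U - G).
  have -> : U - G = (x^-1 * x^-1 + x^-1 * y * x^-1 + y * x^-1 * x^-1) * y^-1.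
    by rewrite /U /G /R2; expand; zmodule.
  by nonneg_laurent_auto.
have -> : e2 - alpha k.+1 = (U - G) * e1 + G * (e1 - alpha k)
    + (e2 - U * e1 - beta k.+1) + beta k.+1.
  by rewrite -G_alpha; expand; zmodule.
apply: nonneg_laurentD; last exact: nonneg_beta.
apply: nonneg_laurentD => //; apply: nonneg_laurentD; apply: nonneg_laurentM => //.
  exact: nonneg_laurent_geq (nonneg_alpha k) bound1.
by rewrite /G; nonneg_laurent_auto.
Qed.

Lemma beta_bound_step k e1 e2 e3 :
  e3 = Q * e2 - C * e1 -> nonneg e1 -> nonneg (e2 - U * e1 - beta k.+1) ->
  nonneg (e3 - U * e2 - beta k.+2).
Proof.
move=> -> nn_e1 bound.
have nonneg_WU_C : nonneg (W * U - C).
  have -> : W * U - C = x * x * y^-1 * x^-1 * x^-1 * y^-1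
      + x * x * y^-1 * x^-1 * y * x^-1 * y^-1 + y^-1.
    by rewrite /W /U /R2 /commC; expand; do 6 cancel_xy; zmodule.
  by nonneg_laurent_auto.
have -> : Q * e2 - C * e1 - U * e2 - beta k.+2
    = (W * U - C) * e1 + W * (e2 - U * e1 - beta k.+1).
  by rewrite /Q -(W_beta k.+1); expand; zmodule.
by apply: nonneg_laurentD; apply: nonneg_laurentM => //; rewrite /W; nonneg_laurent_auto.
Qed.

Lemma nonneg_of_bounds k e1 e2 o :
  nonneg (e1 - alpha k) -> nonneg (e2 - U * e1 - beta k.+1) ->
  e1 * e2 = Cinv + o -> nonneg o.
Proof.
move=> bound1 bound2 e1e2.
have nn_e1 := nonneg_laurent_geq (nonneg_alpha k) bound1.
have bound2' : nonneg (e2 - beta k.+1).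
  have -> : e2 - beta k.+1 = (e2 - U * e1 - beta k.+1) + U * e1 by zmodule.
  by apply: nonneg_laurentD => //; apply: nonneg_laurentM => //; rewrite /U /R2;
    nonneg_laurent_auto.
have nn_e2 := nonneg_laurent_geq (nonneg_beta k.+1) bound2'.
have -> : o = alpha k * (e2 - beta k.+1) + (e1 - alpha k) * e2.
  by rewrite -[o](addKr Cinv) -e1e2 -(alpha_beta k); expand; zmodule.
by apply: nonneg_laurentD; apply: nonneg_laurentM => //; apply: nonneg_alpha.
Qed.

Section Recurrence.
Hypotheses (hdiv : division_ring D) (hfree : free_group_ring_embeds x y).
Variable R : int -> D.
Hypotheses (hev : forall n : int,
     R (2 * n) * C * R (2 * n - 2) = 1 + R (2 * n - 1))
  (hodd : forall n : int,
     R (2 * n + 1) * C * R (2 * n - 1) = 1 + R (2 * n) ^+ 4)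
  (h0 : R 0 = y * x * y^-1) (h1 : R 1 = y).

Definition Reven (m : nat) := R (2 * m)%N.
Definition Rodd (m : nat) := R (2 * m + 1)%N.

Lemma Reven_rec m : Reven m.+1 * C * Reven m = 1 + Rodd m.
Proof.
rewrite /Reven /Rodd -[Posz (2 * m.+1)]/(2 * Posz m.+1).
have -> : Posz (2 * m) = 2 * Posz m.+1 - 2 by lia.
have -> : Posz (2 * m + 1) = 2 * Posz m.+1 - 1 by lia.
exact: hev.
Qed.

Lemma Rodd_rec m : Rodd m.+1 * C * Rodd m = 1 + Reven m.+1 ^+ 4.
Proof.
rewrite /Reven /Rodd -[Posz (2 * m.+1)]/(2 * Posz m.+1).
have -> : Posz (2 * m.+1 + 1) = 2 * Posz m.+1 + 1 by lia.
have -> : Posz (2 * m + 1) = 2 * Posz m.+1 - 1 by lia.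
exact: hodd.
Qed.

Lemma unit_factors a b z :
  a * C * b = 1 + z -> nonneg z -> a \is a GRing.unit /\ b \is a GRing.unit.
Proof.
move=> abz /(add1_nonneg_laurent_neq0 x_unit y_unit hfree); rewrite -abz => ab_neq0.
by split; apply: hdiv; apply: contraNneq ab_neq0 => ->; rewrite ?mul0r ?mulr0.
Qed.

Lemma Reven1 : Reven 1 = R2.
Proof.
have := Reven_rec 0; rewrite [Reven 0]h0 [Rodd 0]h1 /commC !mulrA; do 6 cancel_xy.
by rewrite /R2 => <-; rewrite mulrK.
Qed.

Local Notation conserved := (conserved C Cinv Q).

Lemma conserved0 : conserved (Reven 0) (Reven 1) (Rodd 0).
Proof.
rewrite /conserved Reven1 [Reven 0]h0 [Rodd 0]h1 /Q /U /W /R2 /commC /Cinv.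
by split; expand; do 8 cancel_xy; zmodule.
Qed.

Lemma Reven_step m :
  conserved (Reven m) (Reven m.+1) (Rodd m) -> nonneg (Rodd m) ->
  nonneg (Reven m.+1) ->
  Reven m.+2 = Q * Reven m.+1 - C * Reven m /\
  conserved (Reven m.+1) (Reven m.+2) (Rodd m.+1).
Proof.
move=> cons_m nn_o nn_e.
have [_ o_unit] := unit_factors (Rodd_rec m) (nonneg_laurentX 4 nn_e).
have [e_unit _] := unit_factors (Reven_rec m) nn_o.
by apply: (conserved_step commC_Cinv Cinv_commC cons_m o_unit e_unit (Rodd_rec m));
  apply: Reven_rec.
Qed.

Definition invariant m := [/\ conserved (Reven m) (Reven m.+1) (Rodd m),
  nonneg (Rodd m), nonneg (Reven m.+1 - alpha m)
  & nonneg (Reven m.+2 - U * Reven m.+1 - beta m.+1)].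

Lemma invariant0 : invariant 0.
Proof.
have nn_y : nonneg (Rodd 0) by rewrite [Rodd 0]h1; nonneg_laurent_auto.
have nn_R2 : nonneg (Reven 1) by rewrite Reven1 /R2; nonneg_laurent_auto.
have [rec2 _] := Reven_step conserved0 nn_y nn_R2.
split; [exact: conserved0 | exact: nn_y | |].
  by rewrite Reven1 /alpha /R2 expr0 mulr1; expand; rewrite addrK; nonneg_laurent_auto.
suff -> : Reven 2 - U * Reven 1 - beta 1 = 0 by exact: nonneg_laurent0.
rewrite rec2 Reven1 [Reven 0]h0 /Q /U /W /R2 /beta /commC expr1.
by expand; do 8 cancel_xy; zmodule.
Qed.

Lemma invariantS m : invariant m -> invariant m.+1.
Proof.
case=> cons_m nn_o bound_alpha bound_beta.
have nn_e1 := nonneg_laurent_geq (nonneg_alpha m) bound_alpha.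
have [_ cons_m1] := Reven_step cons_m nn_o nn_e1.
have bound_alpha1 := alpha_bound_step bound_alpha bound_beta.
have nn_o1 : nonneg (Rodd m.+1).
  by case: cons_m1 => _ _ _ _; apply: nonneg_of_bounds bound_alpha bound_beta.
have nn_e2 := nonneg_laurent_geq (nonneg_alpha m.+1) bound_alpha1.
have [rec3 _] := Reven_step cons_m1 nn_o1 nn_e2.
by split=> //; apply: beta_bound_step rec3 nn_e1 bound_beta.
Qed.

Lemma invariant_holds m : invariant m.
Proof. by elim: m => [|m]; [exact: invariant0 | exact: invariantS]. Qed.

Lemma R_nonneg (n : nat) : nonneg (R n).
Proof.
rewrite -(odd_double_half n) -mul2n; case: (odd n) => /=.
  by rewrite addnC; have [] := invariant_holds n./2.
case: n./2 => [|m]; first by rewrite [R _]h0; nonneg_laurent_auto.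
by have [_ _ bound _] := invariant_holds m; apply: nonneg_laurent_geq (nonneg_alpha m) bound.
Qed.

End Recurrence.
End Positivity.

Theorem theorem4p8 (D : unitRingType) (x y : D)
  (hdiv : division_ring D) (hfree : free_group_ring_embeds x y)
  (R : int -> D)
  (hev : forall n : int,
     R (2 * n) * commC x y * R (2 * n - 2) = 1 + R (2 * n - 1))
  (hodd : forall n : int,
     R (2 * n + 1) * commC x y * R (2 * n - 1) = 1 + R (2 * n) ^+ 4)
  (h0 : R 0 = y * x * y^-1) (h1 : R 1 = y) :
  forall n : nat, nonneg_laurent x y (R (Posz n)).
Proof.
have unit_letter l : eval_letter x y l \is a GRing.unit.
  by apply: hdiv; apply: eval_letter_neq0.
exact: (R_nonneg (unit_letter (false, false)) (unit_letter (true, false))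
  hdiv hfree hev hodd h0 h1).
Qed.
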